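(* Let $n$ be a positive integer. Every $\alpha \in \mathcal{M}_n$ can be realized as $\alpha=\mu_n(\xi,\xi')$ for some reals $\xi\neq\xi'$ for which the supremum defining $\mu_n(\xi,\xi')$ is attained at some $(s,t) \in \mathbb{Z}^2 \setminus \{0\}$.
   Context: For reals $\xi\ne\xi'$ and a positive integer $n$, $\mu_n(\xi,\xi') = \sup_{(s,t)\in\mathbb{Z}^2\setminus\{0\}} \dfrac{\gcd(t,n)\,|\xi-\xi'|}{|s-t\xi|\,|s-t\xi'|} \in\mathbb{R}\cup\{\infty\}$ (with $\gcd(0,n)=n$), and $\mathcal{M}_n$ is the set of finite values of $\mu_n(\xi,\xi')$ over pairs of reals $\xi\neq\xi'$. *)

From mathcomp Require Import all_boot all_order all_algebra.
From mathcomp Require Import all_classical all_reals ereal.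
Set Implicit Arguments. Unset Strict Implicit. Unset Printing Implicit Defensive.
Import Order.TTheory GRing.Theory Num.Theory.
Local Open Scope ring_scope.
Local Open Scope classical_set_scope.

(* When the denominator vanishes the numerator
   is positive (xi <> xi', n > 0), so the term is +oo. *)
Definition mu_term (R : realType) (n : nat) (xi xi' : R) (s t : int) : \bar R :=
  let den := `|s%:~R - t%:~R * xi| * `|s%:~R - t%:~R * xi'| in
  if den == 0 then +oo%E
  else (((gcdn `|t|%N n)%:R * `|xi - xi'|) / den)%:E.

Definition mu (R : realType) (n : nat) (xi xi' : R) : \bar R :=
  ereal_sup [set mu_term n xi xi' st.1 st.2 | st in [set st : int * int | st != (0, 0)]].

Definition Mset (R : realType) (n : nat) : set R :=
  [set a | exists xi xi' : R, xi != xi' /\ mu n xi xi' = a%:E].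

(* If mu_n(x, x') = A is finite, then x and x' are irrational and A > 0.  Take
   primitive pairs (s_k, t_k) whose terms exceed A - 1/(k+1) and complete them
   to matrices g_k in SL_2(Z), translated so that g_k x lies in [0, 1).  The
   substitution (x, x') |-> (g_k x, g_k x') permutes the pairs (s, t) and
   preserves |x - x'| / (|s - t x| |s - t x'|); it only changes the weight
   gcd(t, n) into a weight depending on g_k mod n.  Along a subsequence on
   which g_k mod n is constant and g_k x, g_k x' converge to l, l', the weighted
   terms of (l, l') are all at most A and the one at (1, 0) equals A.  Pulling
   (l, l') back by g_k^-1 yields a pair whose mu_n is A, attained at the pair
   corresponding to (1, 0). *)

From mathcomp Require Import all_boot all_order all_algebra.
From mathcomp Require Import all_classical all_reals ereal.
From mathcomp Require Import topology normedtype sequences.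
From mathcomp Require Import ring.
Set Implicit Arguments. Unset Strict Implicit. Unset Printing Implicit Defensive.
Import Order.TTheory GRing.Theory Num.Theory numFieldNormedType.Exports.
Local Open Scope ring_scope.
Local Open Scope classical_set_scope.

Section LinearForms.
Variable R : numFieldType.
Implicit Types (x y : R) (s t : int).

Definition lin s t x : R := s%:~R - t%:~R * x.

Definition irrational x := forall s t, (s, t) != (0, 0) -> lin s t x != 0.

Definition ratio x y s t : R := `|x - y| / (`|lin s t x| * `|lin s t y|).

Lemma lin10 x : lin 1 0 x = 1.
Proof. by rewrite /lin mul0r subr0. Qed.

Lemma ratio10 x y : ratio x y 1 0 = `|x - y|.
Proof. by rewrite /ratio !lin10 normr1 mulr1 divr1. Qed.

Lemma ratio_ge0 x y s t : 0 <= ratio x y s t.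
Proof. by rewrite divr_ge0 ?mulr_ge0. Qed.

Lemma lin_scale (g : int) s t x : lin (s * g) (t * g) x = g%:~R * lin s t x.
Proof. by rewrite /lin !intrM; ring. Qed.

Lemma ratio_scale (g : int) x y s t :
  ratio x y (s * g) (t * g) = ratio x y s t / g%:~R ^+ 2.
Proof.
rewrite /ratio !lin_scale !normrM mulrACA -expr2 real_normK ?num_real //.
by rewrite invfM mulrA mulrAC.
Qed.

Lemma ratio_le (w A x y : R) s t : irrational x -> irrational y -> (s, t) != (0, 0) ->
  (w * ratio x y s t <= A) = (w * `|x - y| <= A * (`|lin s t x| * `|lin s t y|)).
Proof.
move=> irr_x irr_y st0; rewrite /ratio mulrA ler_pdivrMr //.
by rewrite mulr_gt0 // normr_gt0 ?irr_x ?irr_y.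
Qed.

Lemma irrational_of_weighted_bound (W : int -> int -> R) (A l l' : R) :
  (forall s t, 0 < W s t) -> l != l' ->
  (forall s t, (s, t) != (0, 0) ->
     W s t * `|l - l'| <= A * (`|lin s t l| * `|lin s t l'|)) ->
  irrational l /\ irrational l'.
Proof.
move=> W_gt0 ll' le_A.
suff den0 s t : (s, t) != (0, 0) -> `|lin s t l| * `|lin s t l'| != 0.
  by split=> s t /den0; rewrite mulf_eq0 !normr_eq0 negb_or => /andP[].
move=> st0; apply: contraTneq (le_A s t st0) => ->.
by rewrite mulr0 lt_geF // mulr_gt0 // normr_gt0 subr_eq0.
Qed.

End LinearForms.

Record sl2 := SL2 {
  sl2a : int; sl2b : int; sl2c : int; sl2d : int;
  sl2_det : sl2a * sl2d - sl2b * sl2c = 1 }.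

Lemma sl2_inv_det (g : sl2) : sl2d g * sl2a g - (- sl2b g) * (- sl2c g) = 1.
Proof. by rewrite -(sl2_det g); ring. Qed.

Definition sl2_inv (g : sl2) : sl2 := SL2 (sl2_inv_det g).

Lemma sl2_shift_det (g : sl2) (m : int) :
  (sl2a g + m * sl2c g) * sl2d g - (sl2b g + m * sl2d g) * sl2c g = 1.
Proof. by rewrite -(sl2_det g); ring. Qed.

Definition sl2_shift (g : sl2) (m : int) : sl2 := SL2 (sl2_shift_det g m).

Section Mobius.
Variable R : numFieldType.
Variable g : sl2.
Local Notation a := (sl2a g).
Local Notation b := (sl2b g).
Local Notation c := (sl2c g).
Local Notation d := (sl2d g).
Implicit Types (x y : R) (s t : int).

Definition mobius x : R := (a%:~R * x + b%:~R) / (c%:~R * x + d%:~R).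

Definition pull (st : int * int) : int * int :=
  (st.1 * d - st.2 * b, st.2 * a - st.1 * c).

Definition push (st : int * int) : int * int :=
  (st.1 * a + st.2 * b, st.1 * c + st.2 * d).

Lemma pullK : cancel pull push.
Proof.
case=> s t; rewrite /pull /push /=; congr (_, _).
  by rewrite -[s in RHS]mulr1 -(sl2_det g); ring.
by rewrite -[t in RHS]mulr1 -(sl2_det g); ring.
Qed.

Lemma pushK : cancel push pull.
Proof.
case=> s t; rewrite /pull /push /=; congr (_, _).
  by rewrite -[s in RHS]mulr1 -(sl2_det g); ring.
by rewrite -[t in RHS]mulr1 -(sl2_det g); ring.
Qed.

Lemma pull_eq0 st : (pull st == (0, 0)) = (st == (0, 0)).
Proof.
have pull0 : pull (0, 0) = (0, 0) by rewrite /pull /= !mul0r subr0.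
by rewrite -{1}pull0 (inj_eq (can_inj pullK)).
Qed.

Lemma mobius_den_neq0 x : irrational x -> c%:~R * x + d%:~R != 0.
Proof.
move=> irr_x; have : (d, - c) != (0, 0).
  apply: contra_eq_neq (sl2_det g) => -[-> /eqP]; rewrite oppr_eq0 => /eqP ->.
  by rewrite !mulr0 subr0 eq_sym oner_eq0.
by move=> /irr_x; rewrite /lin mulrNz mulNr opprK addrC.
Qed.

Lemma lin_mobius s t x : c%:~R * x + d%:~R != 0 ->
  lin s t (mobius x) = lin (pull (s, t)).1 (pull (s, t)).2 x / (c%:~R * x + d%:~R).
Proof. by move=> den0; rewrite /lin /mobius /= !(intrB, intrM); field. Qed.

Lemma mobius_sub x y : c%:~R * x + d%:~R != 0 -> c%:~R * y + d%:~R != 0 ->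
  mobius x - mobius y = (x - y) / ((c%:~R * x + d%:~R) * (c%:~R * y + d%:~R)).
Proof.
have detR : a%:~R * d%:~R - b%:~R * c%:~R = 1 :> R.
  by rewrite -!intrM -intrB sl2_det.
move=> den0 den0'; rewrite -[x - y]mul1r -[in 1 * _]detR /mobius.
by field; rewrite den0 den0'.
Qed.

Lemma ratio_mobius x y s t : c%:~R * x + d%:~R != 0 -> c%:~R * y + d%:~R != 0 ->
  ratio (mobius x) (mobius y) s t = ratio x y (pull (s, t)).1 (pull (s, t)).2.
Proof.
move=> den0 den0'; rewrite /ratio mobius_sub // !lin_mobius //.
rewrite !(normrM, normfV) !invfM !invrK.
move: (`|lin _ _ x|^-1) (`|lin _ _ y|^-1) => u u'.
by field; rewrite !normr_eq0 den0 den0'.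
Qed.

Lemma irrational_mobius x : irrational x -> irrational (mobius x).
Proof.
move=> irr_x s t st0; rewrite lin_mobius ?mobius_den_neq0 //.
by rewrite mulf_neq0 ?invr_eq0 ?mobius_den_neq0 // irr_x // -surjective_pairing pull_eq0.
Qed.

End Mobius.

Lemma mobius_shift (R : numFieldType) (g : sl2) (m : int) (x : R) :
  (sl2c g)%:~R * x + (sl2d g)%:~R != 0 ->
  mobius (sl2_shift g m) x = mobius g x + m%:~R.
Proof. by move=> den0; rewrite /mobius /= !(intrD, intrM); field. Qed.

Lemma mobiusK (R : numFieldType) (g : sl2) (x : R) :
  irrational x -> mobius g (mobius (sl2_inv g) x) = x.
Proof.
case: g => a b c d det1 irr_x.
have := mobius_den_neq0 (sl2_inv (SL2 det1)) irr_x.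
rewrite /= intrN mulNr addrC => den0; set y := mobius _ x.
have detR : a%:~R * d%:~R - b%:~R * c%:~R = 1 :> R by rewrite -!intrM -intrB det1.
have num_y : a%:~R * y + b%:~R = (a%:~R * d%:~R - b%:~R * c%:~R) * x / (a%:~R - c%:~R * x).
  by rewrite /y /mobius /= !intrN; field.
have den_y : c%:~R * y + d%:~R = (a%:~R * d%:~R - b%:~R * c%:~R) / (a%:~R - c%:~R * x).
  by rewrite /y /mobius /= !intrN; field.
by rewrite /mobius num_y den_y detR mul1r; field.
Qed.

Section Subsequences.
Variable R : realType.

Lemma increasing_seq_ge (f : nat -> nat) k : increasing_seq f -> (k <= f k)%N.
Proof.
move=> /increasing_seqP f_lt; elim: k => // k IH.
exact: leq_ltn_trans IH (f_lt k).
Qed.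

Lemma increasing_seq_cvgy (f : nat -> nat) : increasing_seq f -> f @ \oo --> \oo.
Proof.
move=> f_incr; apply/cvgnyPge => M; near=> k.
by apply: leq_trans (increasing_seq_ge k f_incr); near: k; exact: nbhs_infty_ge.
Unshelve. all: end_near. Qed.

Lemma increasing_seq_comp (f g : nat -> nat) :
  increasing_seq f -> increasing_seq g -> increasing_seq (f \o g).
Proof. by move=> f_incr g_incr i j /=; rewrite f_incr -!leEnat g_incr. Qed.

Lemma cvgn_comp_increasing (u : R^nat) (f : nat -> nat) :
  increasing_seq f -> cvgn u -> cvgn (u \o f).
Proof.
move=> f_incr /cvg_ex[l ul]; apply/cvg_ex; exists l.
exact: cvg_comp (increasing_seq_cvgy f_incr) ul.
Qed.

Lemma bounded_subseq_cvg (K : finType) (key : nat -> K) (u v : R^nat) (M : R) :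
  (forall k, `|u k| <= M) -> (forall k, `|v k| <= M) ->
  exists f : nat -> nat, [/\ increasing_seq f, forall k, key (f k) = key (f 0%N),
    cvgn (u \o f) & cvgn (v \o f)].
Proof.
move=> uM vM.
have bounded (w : R^nat) (h : nat -> nat) : (forall k, `|w k| <= M) -> bounded_fun (w \o h).
  move=> wM; apply/(@ex_bound _ _ _ _ _ (globally_properfilter (a := 0%N) I)).
  by exists M => k _; exact: wM.
have [i [A A_inf keyA]] := finite_range_cst_subsequence (@finite_finset _ (range key)).
have [|f0 [f0_incr _ f0A]] := infinite_increasing_seq_wf _ A_inf 0%N.
  by move=> m; apply: sub_finite_set (finite_II m.+1) => k /=.
have [f1 f1_incr cvg_u] := bolzano_weierstrass (bounded u f0 uM).
have [f2 f2_incr cvg_v] := bolzano_weierstrass (bounded v (f0 \o f1) vM).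
exists (f0 \o f1 \o f2); split.
- by do 2 apply: increasing_seq_comp.
- by move=> k; rewrite /= !(proj1 (keyA _) (f0A _)).
- exact: cvgn_comp_increasing f2_incr cvg_u.
- exact: cvg_v.
Qed.

Lemma cvg_lin s t (u : R^nat) (l : R) :
  u @ \oo --> l -> (fun k => lin s t (u k)) @ \oo --> lin s t l.
Proof. by move=> ul; apply: cvgB; [exact: cvg_cst | exact: cvgMl_tmp]. Qed.

Lemma extremal_limit (K : finType) (W : K -> int -> int -> R) (key : nat -> K)
    (y y' : R^nat) (A M : R) :
  (forall k, `|y k| <= M) -> (forall k, `|y' k| <= M) ->
  (forall k s t, (s, t) != (0, 0) ->
     W (key k) s t * `|y k - y' k| <= A * (`|lin s t (y k)| * `|lin s t (y' k)|)) ->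
  (forall k, A - harmonic k < W (key k) 1 0 * `|y k - y' k|) ->
  exists k0 l l', W (key k0) 1 0 * `|l - l'| = A /\
    forall s t, (s, t) != (0, 0) ->
      W (key k0) s t * `|l - l'| <= A * (`|lin s t l| * `|lin s t l'|).
Proof.
move=> yM y'M le_y gt_y.
have [f [f_incr f_key /cvg_ex[l yl] /cvg_ex[l' y'l']]] := bounded_subseq_cvg key yM y'M.
pose W0 := W (key (f 0%N)).
have cvg_W s t :
    (fun k => W0 s t * `|y (f k) - y' (f k)|) @ \oo --> W0 s t * `|l - l'|.
  by apply: cvgMl_tmp; apply: cvg_norm; exact: cvgB.
have le_lim s t : (s, t) != (0, 0) ->
    W0 s t * `|l - l'| <= A * (`|lin s t l| * `|lin s t l'|).
  move=> st0; apply: ler_cvg_to (cvg_W s t) _ _.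
    apply: cvgMl_tmp; apply: cvgM; apply: cvg_norm.
      exact: cvg_lin yl.
    exact: cvg_lin y'l'.
  by near=> k; rewrite /W0 -(f_key k); exact: le_y.
exists (f 0%N), l, l'; split => //; apply/le_anti/andP; split.
  by have := le_lim 1 0 isT; rewrite !lin10 normr1 !mulr1.
have cvg_A : (fun k => A - harmonic (f k)) @ \oo --> A.
  rewrite -[X in _ --> X]subr0; apply: cvgB; first exact: cvg_cst.
  exact: cvg_comp (increasing_seq_cvgy f_incr) cvg_harmonic.
apply: ler_cvg_to cvg_A (cvg_W 1 0) _.
by near=> k; rewrite /W0 -(f_key k); exact/ltW/gt_y.
Unshelve. all: end_near. Qed.

End Subsequences.

Lemma gcdn_mul_dvd (t g m : nat) : (gcdn (t * g) m %| g * gcdn t m)%N.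
Proof.
rewrite muln_gcdr dvdn_gcd mulnC dvdn_gcdl /=.
exact: dvdn_mull (dvdn_gcdr _ _).
Qed.

Section Mu.
Variable R : realType.
Variable n : nat.
Hypothesis n_gt0 : (0 < n)%N.
Implicit Types (x y A : R) (s t : int).

Lemma mu_term_le_mu x y s t : (s, t) != (0, 0) -> (mu_term n x y s t <= mu n x y)%E.
Proof. by move=> st0; apply: ereal_sup_ubound; exists (s, t). Qed.

Lemma mu_eq_attained x y A s0 t0 :
  (forall s t, (s, t) != (0, 0) -> (mu_term n x y s t <= A%:E)%E) ->
  (s0, t0) != (0, 0) -> mu_term n x y s0 t0 = A%:E -> mu n x y = A%:E.
Proof.
move=> le_A st0 eq_A; apply/le_anti/andP; split; last by rewrite -eq_A mu_term_le_mu.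
by apply: ge_ereal_sup => _ [[s t] /= st <-]; exact: le_A.
Qed.

Lemma mu_finite_irrational x y A : mu n x y = A%:E -> irrational x /\ irrational y.
Proof.
move=> muA; suff den0 s t : (s, t) != (0, 0) -> `|lin s t x| * `|lin s t y| != 0.
  by split=> s t /den0; rewrite mulf_eq0 !normr_eq0 negb_or => /andP[].
move=> st0; apply/eqP => den0; have := mu_term_le_mu x y st0.
by rewrite muA /mu_term -/(lin s t x) -/(lin s t y) den0 eqxx.
Qed.

Lemma mu_termE x y s t : irrational x -> irrational y -> (s, t) != (0, 0) ->
  mu_term n x y s t = ((gcdn `|t| n)%:R * ratio x y s t)%:E.
Proof.
move=> irr_x irr_y st0; rewrite /mu_term -/(lin s t x) -/(lin s t y).
by rewrite mulf_eq0 !normr_eq0 (negPf (irr_x _ _ st0)) (negPf (irr_y _ _ st0)) /= mulrA.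
Qed.

Lemma mu_gt0 x y A : x != y -> mu n x y = A%:E -> 0 < A.
Proof.
move=> xy muA; have [irr_x irr_y] := mu_finite_irrational muA.
have := @mu_term_le_mu x y 1 0 isT; rewrite muA mu_termE // ratio10 lee_fin.
by apply: lt_le_trans; rewrite mulr_gt0 ?ltr0n ?gcdn_gt0 ?n_gt0 ?orbT // normr_gt0 subr_eq0.
Qed.

Lemma mu_term_primitive x y s t : irrational x -> irrational y -> (s, t) != (0, 0) ->
  exists s1 t1, gcdz s1 t1 = 1 /\ (mu_term n x y s t <= mu_term n x y s1 t1)%E.
Proof.
move=> irr_x irr_y st0; have [g gE] : exists g, gcdn `|s|%N `|t|%N = g by eexists.
have g_gt0 : (0 < g)%N.
  rewrite -gE gcdn_gt0 !absz_gt0 -negb_and.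
  by apply: contra st0 => /andP[/eqP -> /eqP ->].
have [es et] : s = (s %/ g)%Z * g /\ t = (t %/ g)%Z * g.
  by rewrite !divzK // -gE ?dvdz_gcdl ?dvdz_gcdr.
exists (s %/ g)%Z, (t %/ g)%Z.
move: (s %/ g)%Z (t %/ g)%Z es et gE st0 => s1 t1 -> -> gE st0.
have cop : gcdz s1 t1 = 1.
  congr Posz; apply/eqP; rewrite -(eqn_pmul2r g_gt0) mul1n muln_gcdl.
  by rewrite -!(abszM _ g) gE.
have st1 : (s1, t1) != (0, 0) by apply: contra_eq_neq cop => -[-> ->].
split=> //; rewrite !mu_termE // ratio_scale -pmulrn lee_fin mulrCA [X in _ <= X]mulrC.
rewrite ler_wpM2l ?ratio_ge0 // ler_pdivrMr ?exprn_gt0 ?ltr0n // -natrX -natrM ler_nat.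
apply: leq_trans (_ : g * gcdn `|t1| n <= _)%N.
  by rewrite abszM dvdn_leq ?gcdn_mul_dvd // muln_gt0 g_gt0 gcdn_gt0 n_gt0 orbT.
by rewrite mulnC leq_mul2l leq_pmulr ?orbT.
Qed.

(* The factor gcd(t', n) of [mu_term] at [pull g (s, t) = (s', t')], as
   t' = t * sl2a g - s * sl2c g. *)
Definition weight (a c s t : int) : R := (gcdn `|(t * a - s * c)%R|%N n)%:R.

Lemma weight_ge1 a c s t : 1 <= weight a c s t.
Proof. by rewrite ler1n gcdn_gt0 n_gt0 orbT. Qed.

Lemma weight_gt0 a c s t : 0 < weight a c s t.
Proof. exact: lt_le_trans ltr01 (weight_ge1 a c s t). Qed.

Lemma weight_modz a c s t : weight a c s t = weight (a %% n)%Z (c %% n)%Z s t.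
Proof.
rewrite /weight; congr (_ %:R); apply/eqP; rewrite -eqz_nat.
change (gcdz (t * a - s * c) n == gcdz (t * (a %% n)%Z - s * (c %% n)%Z) n).
rewrite {1}(divz_eq a n) {1}(divz_eq c n).
have -> : t * ((a %/ n)%Z * n + (a %% n)%Z) - s * ((c %/ n)%Z * n + (c %% n)%Z) =
    (t * (a %/ n)%Z - s * (c %/ n)%Z) * n + (t * (a %% n)%Z - s * (c %% n)%Z) by ring.
by rewrite gcdzC gcdzMDl gcdzC.
Qed.

Lemma mu_term_pull (g : sl2) x y s t :
  irrational x -> irrational y -> (s, t) != (0, 0) ->
  mu_term n x y (pull g (s, t)).1 (pull g (s, t)).2 =
  (weight (sl2a g) (sl2c g) s t * ratio (mobius g x) (mobius g y) s t)%:E.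
Proof.
move=> irr_x irr_y st0.
rewrite ratio_mobius ?mobius_den_neq0 // mu_termE //.
by rewrite -surjective_pairing pull_eq0.
Qed.

Lemma unimodular_near_mu x y A (e : R) : mu n x y = A%:E -> 0 < e ->
  exists g : sl2, 0 <= mobius g x < 1 /\
    A - e < weight (sl2a g) (sl2c g) 1 0 * `|mobius g x - mobius g y|.
Proof.
move=> muA e_gt0; have [irr_x irr_y] := mu_finite_irrational muA.
have : ((A - e)%:E < mu n x y)%E by rewrite muA lte_fin gtrBl.
case/ereal_sup_gt => _ [[s t] /= st0 <-] lt_st.
have [s1 [t1 [cop le_st]]] := mu_term_primitive irr_x irr_y st0.
have [u [v]] := Bezoutz s1 t1; rewrite cop => uv1.
have det0 : u * s1 - v * - t1 = 1 by rewrite -uv1 mulrN opprK.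
pose g0 := SL2 det0; pose g := sl2_shift g0 (- Num.floor (mobius g0 x)).
exists g; split.
  rewrite mobius_shift ?(mobius_den_neq0 g0) // intrN subr_ge0 ltrBlDl addrC.
  by have := floor_itv (mobius g0 x); rewrite intrD addrC.
have := @mu_term_pull g x y 1 0 irr_x irr_y isT.
rewrite ratio10 /pull /= !(mul1r, mul0r, subr0, sub0r) opprK -lte_fin => <-.
exact: lt_le_trans lt_st le_st.
Qed.

Lemma residue_lt (z : int) : (`|(z %% n)%Z|%N < n)%N.
Proof.
have n_neq0 : n%:Z != 0 by rewrite eqz_nat -lt0n.
by rewrite -ltz_nat gez0_abs ?modz_ge0 // ltz_pmod // ltz_nat.
Qed.

Definition residue (z : int) : 'I_n := Ordinal (residue_lt z).

Lemma residueE (z : int) : (residue z)%:Z = (z %% n)%Z.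
Proof. by rewrite /= gez0_abs // modz_ge0 // eqz_nat -lt0n. Qed.

Lemma weight_residue a c s t : weight (residue a) (residue c) s t = weight a c s t.
Proof. by rewrite weight_modz [RHS]weight_modz !residueE !modz_mod. Qed.

Lemma mu_limit_pair x y A : x != y -> mu n x y = A%:E ->
  exists (g : sl2) (l l' : R), weight (sl2a g) (sl2c g) 1 0 * `|l - l'| = A /\
    forall s t, (s, t) != (0, 0) ->
      weight (sl2a g) (sl2c g) s t * `|l - l'| <= A * (`|lin s t l| * `|lin s t l'|).
Proof.
move=> xy muA; have [irr_x irr_y] := mu_finite_irrational muA.
have [g g_spec] := choice (fun k => unimodular_near_mu muA (harmonic_gt0 k)).
pose u k := mobius (g k) x; pose v k := mobius (g k) y.
have irr_u k : irrational (u k) := irrational_mobius (g k) irr_x.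
have irr_v k : irrational (v k) := irrational_mobius (g k) irr_y.
have le_A k s t : (s, t) != (0, 0) -> weight (sl2a (g k)) (sl2c (g k)) s t * `|u k - v k| <=
    A * (`|lin s t (u k)| * `|lin s t (v k)|).
  move=> st0; rewrite -ratio_le // -lee_fin -mu_term_pull // -muA.
  by rewrite mu_term_le_mu // -surjective_pairing pull_eq0.
have uv_le k : `|u k - v k| <= A.
  apply: le_trans (_ : weight (sl2a (g k)) (sl2c (g k)) 1 0 * `|u k - v k| <= A).
    by rewrite ler_peMl ?weight_ge1.
  by have := le_A k 1 0 isT; rewrite !lin10 normr1 !mulr1.
have u_le1 k : `|u k| <= 1.
  by have /andP[u_ge0 u_lt1] := (g_spec k).1; rewrite ger0_norm // ltW.
have u_le k : `|u k| <= 1 + A.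
  by rewrite (le_trans (u_le1 k)) // lerDl (le_trans _ (uv_le k)).
have v_le k : `|v k| <= 1 + A.
  have -> : v k = u k - (u k - v k) by rewrite opprB addrC subrK.
  by rewrite (le_trans (ler_normB _ _)) // lerD.
pose key k := (residue (sl2a (g k)), residue (sl2c (g k))).
pose W (i : 'I_n * 'I_n) := weight i.1 i.2.
have W_key k : W (key k) = weight (sl2a (g k)) (sl2c (g k)).
  by apply/funext => s; apply/funext => t; rewrite /W weight_residue.
have le_W k s t : (s, t) != (0, 0) ->
    W (key k) s t * `|u k - v k| <= A * (`|lin s t (u k)| * `|lin s t (v k)|).
  by rewrite W_key; exact: le_A.
have gt_W k : A - harmonic k < W (key k) 1 0 * `|u k - v k|.
  by rewrite W_key; exact: (g_spec k).2.
have [k0 [l [l' [eqA le_lim]]]] := extremal_limit u_le v_le le_W gt_W.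
by exists (g k0), l, l'; rewrite -W_key.
Qed.

Lemma mu_pullback_attained (g : sl2) l l' A : 0 < A ->
  weight (sl2a g) (sl2c g) 1 0 * `|l - l'| = A ->
  (forall s t, (s, t) != (0, 0) ->
     weight (sl2a g) (sl2c g) s t * `|l - l'| <= A * (`|lin s t l| * `|lin s t l'|)) ->
  let X := mobius (sl2_inv g) l in let X' := mobius (sl2_inv g) l' in
  [/\ X != X', mu n X X' = A%:E & mu_term n X X' (pull g (1, 0)).1 (pull g (1, 0)).2 = A%:E].
Proof.
move=> A_gt0 eq_A le_A X X'.
have ll' : l != l'.
  by apply: contraTneq A_gt0 => eq_l; rewrite -eq_A eq_l subrr normr0 mulr0 ltxx.
have [irr_l irr_l'] := irrational_of_weighted_bound (weight_gt0 _ _) ll' le_A.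
have gX : mobius g X = l by exact: mobiusK.
have gX' : mobius g X' = l' by exact: mobiusK.
have irr_X : irrational X := irrational_mobius _ irr_l.
have irr_X' : irrational X' := irrational_mobius _ irr_l'.
have termE s t : (s, t) != (0, 0) ->
    mu_term n X X' (pull g (s, t)).1 (pull g (s, t)).2 =
    (weight (sl2a g) (sl2c g) s t * ratio l l' s t)%:E.
  by move=> st0; rewrite mu_term_pull // gX gX'.
have term_A : mu_term n X X' (pull g (1, 0)).1 (pull g (1, 0)).2 = A%:E.
  by rewrite termE // ratio10 eq_A.
split=> //.
  by apply: contra_neq ll' => eqX; rewrite -gX -gX' eqX.
apply: mu_eq_attained _ term_A; last by rewrite pull_eq0.
move=> S T ST0; have := pushK g (S, T); case: (push g (S, T)) => s t eST.
have st0 : (s, t) != (0, 0) by rewrite -(pull_eq0 g) eST.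
have [-> ->] : S = (pull g (s, t)).1 /\ T = (pull g (s, t)).2 by rewrite eST.
by rewrite termE // lee_fin ratio_le // le_A.
Qed.

End Mu.

Unset Implicit Arguments.

Theorem proposition3p5 (R : realType) (n : nat) (hn : (0 < n)%N) (a : R) :
  a \in @Mset R n ->
  exists xi xi' : R, xi != xi' /\ mu n xi xi' = a%:E /\
    exists s t : int, (s, t) != (0, 0) /\ mu_term n xi xi' s t = a%:E.
Proof.
move=> /set_mem[x [y [xy mu_a]]].
have [g [l [l' [eq_a le_a]]]] := mu_limit_pair hn xy mu_a.
have [XX' mu_X term_X] := mu_pullback_attained hn (mu_gt0 hn xy mu_a) eq_a le_a.
exists (mobius (sl2_inv g) l), (mobius (sl2_inv g) l'); do 2 split=> //.
by exists (pull g (1, 0)).1, (pull g (1, 0)).2; rewrite -surjective_pairing pull_eq0.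
Qed.
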